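(* A class $K$ of algebras of type $\tau$ is a hyperquasivariety if and only if $K$ (i) is closed under ultraproducts, (ii) is closed under (isomorphic copies of) subalgebras, (iii) is closed under direct products, (iv) contains a trivial (one-element) algebra, and (v) is deriverably closed, i.e. $\mathbf D(K)\subseteq K$.
   Context: A hypersubstitution $\sigma$ of type $\tau$ assigns to each $n$-ary operation symbol an $n$-ary term of type $\tau$, extended to all terms; the derived algebra $\mathbf A^\sigma$ has the same universe as $\mathbf A$ with each fundamental operation $f_\gamma$ replaced by $\sigma(f_\gamma)^{\mathbf A}$, and $\mathbf D(K)$ is the class of all derived algebras of members of $K$. A hyper-quasi-identity $\bigwedge_{i<n}(t_i=s_i)\to(t_n=s_n)$ (terms of type $\tau$, operation symbols read as hypervariables) is hypersatisfied in $\mathbf A$ if for every hypersubstitution $\sigma$ the quasi-identity $\bigwedge_{i<n}(\sigma(t_i)=\sigma(s_i))\to(\sigma(t_n)=\sigma(s_n))$ holds in $\mathbf A$. A hyperquasivariety is a class consisting exactly of the algebras of type $\tau$ that hypersatisfy all members of some set $\Sigma$ of hyper-quasi-identities. *)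

From mathcomp Require Import all_boot.
From Stdlib Require List.
Set Implicit Arguments. Unset Strict Implicit. Unset Printing Implicit Defensive.

Section UA.
(* A type tau: a type of operation symbols [sym] with arities [ar]. *)
Variables (sym : Type) (ar : sym -> nat).

Record algebra := Algebra {
  carrier :> Type;
  op : forall f : sym, ('I_(ar f) -> carrier) -> carrier;
  carrier_nonempty : inhabited carrier }.

Inductive term (V : Type) : Type :=
  | Var (x : V)
  | App (f : sym) (args : 'I_(ar f) -> term V).

Fixpoint subst (W V : Type) (t : term W) (s : W -> term V) : term V :=
  match t with
  | Var x => s x
  | App f a => @App V f (fun j => subst (a j) s)
  end.

Fixpoint eval (A : algebra) (V : Type) (v : V -> A) (t : term V) : A :=
  match t with
  | Var x => v x
  | App f a => @op A f (fun j => eval v (a j))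
  end.

Definition hypersubst := forall f : sym, term 'I_(ar f).

Fixpoint hsext (sigma : hypersubst) (V : Type) (t : term V) : term V :=
  match t with
  | Var x => @Var V x
  | App f a => subst (sigma f) (fun j => hsext sigma (a j))
  end.

Definition derived (A : algebra) (sigma : hypersubst) : algebra :=
  @Algebra (carrier A) (fun f args => eval args (sigma f)) (carrier_nonempty A).

(* Hyper-quasi-identities over the countable variable set nat:
   /\_{i<n} (t_i = s_i) -> (t_n = s_n). *)
Record hqi := HQI {
  premises : seq (term nat * term nat);
  conclusion : term nat * term nat }.

Definition qi_holds (A : algebra) (ps : seq (term nat * term nat))
  (c : term nat * term nat) : Prop :=
  forall v : nat -> A,
    (forall p, List.In p ps -> eval v p.1 = eval v p.2) ->
    eval v c.1 = eval v c.2.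

Definition hypersatisfies (A : algebra) (q : hqi) : Prop :=
  forall sigma : hypersubst,
    qi_holds A [seq (hsext sigma p.1, hsext sigma p.2) | p <- premises q]
               (hsext sigma (conclusion q).1, hsext sigma (conclusion q).2).

Definition hyperquasivariety (K : algebra -> Prop) : Prop :=
  exists Sigma : hqi -> Prop,
    forall A : algebra, K A <-> (forall q, Sigma q -> hypersatisfies A q).

Definition is_hom (A B : algebra) (h : A -> B) : Prop :=
  forall f (args : 'I_(ar f) -> A), h (@op A f args) = @op B f (fun j => h (args j)).

(* B is (isomorphic to) a subalgebra of A: there is an embedding B -> A. *)
Definition closed_S (K : algebra -> Prop) : Prop :=
  forall A B : algebra, K A ->
    forall h : B -> A, injective h -> is_hom h -> K B.

(* B is (isomorphic to) the direct product of the family (A i). *)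
Definition is_product (I : Type) (A : I -> algebra) (B : algebra) : Prop :=
  exists h : B -> (forall i, A i),
    bijective h /\
    forall f (args : 'I_(ar f) -> B),
      h (@op B f args) = fun i => @op (A i) f (fun j => h (args j) i).

Definition closed_P (K : algebra -> Prop) : Prop :=
  forall (I : Type) (A : I -> algebra) (B : algebra),
    (forall i, K (A i)) -> is_product A B -> K B.

Definition ultrafilter (I : Type) (U : (I -> Prop) -> Prop) : Prop :=
  [/\ U (fun _ => True),
      ~ U (fun _ => False),
      (forall X Y : I -> Prop, U X -> (forall i, X i -> Y i) -> U Y),
      (forall X Y : I -> Prop, U X -> U Y -> U (fun i => X i /\ Y i)) &
      (forall X : I -> Prop, U X \/ U (fun i => ~ X i))].

(* B is (isomorphic to) the ultraproduct of (A i) modulo U: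
   a surjective homomorphism from the direct product onto B whose kernel is
   U-almost-everywhere equality. *)
Definition is_ultraproduct (I : Type) (A : I -> algebra)
  (U : (I -> Prop) -> Prop) (B : algebra) : Prop :=
  exists h : (forall i, A i) -> B,
    [/\ (forall b : B, exists x, h x = b),
        (forall x y, h x = h y <-> U (fun i => x i = y i)) &
        (forall f (args : 'I_(ar f) -> forall i, A i),
           h (fun i => @op (A i) f (fun j => args j i))
           = @op B f (fun j => h (args j)))].

Definition closed_Pu (K : algebra -> Prop) : Prop :=
  forall (I : Type) (A : I -> algebra) (U : (I -> Prop) -> Prop) (B : algebra),
    ultrafilter U -> (forall i, K (A i)) -> is_ultraproduct A U B -> K B.

Definition has_trivial (K : algebra -> Prop) : Prop :=
  exists A : algebra, K A /\ forall x y : A, x = y.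

Definition closed_D (K : algebra -> Prop) : Prop :=
  forall (A : algebra) (sigma : hypersubst), K A -> K (derived A sigma).

End UA.

(* Necessity is the usual preservation of quasi-identities under ultraproducts,
   subalgebras and products, together with the fact that hypersubstitutions
   compose, so that A^sigma hypersatisfies whatever A does.

   For sufficiency, when D(K) is contained in K a quasi-identity holds
   throughout K iff it is hypersatisfied throughout K, so it suffices to show
   that an algebra A satisfying every quasi-identity of K lies in K.  For
   a <> b in A and a finite part l of the operation table of A, the
   quasi-identity "table l implies a = b" fails in A, hence in some member of K:
   some map A -> C in K respects l and separates a and b.  An ultraproduct of
   these maps along an ultrafilter refining "l contains a given finite table"
   is a homomorphism into K separating a and b; the product of such separating
   homomorphisms over all pairs a <> b embeds A into a member of K. *)

From mathcomp Require Import all_boot.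
From mathcomp Require Import boolp filter.
From Stdlib Require List.
Set Implicit Arguments. Unset Strict Implicit. Unset Printing Implicit Defensive.

Lemma In_enum (T : finType) (x : T) : List.In x (enum T).
Proof.
have : x \in enum T by rewrite mem_enum.
by elim: (enum T) => [|y s IH] //=; rewrite in_cons => /orP[/eqP ->|/IH]; auto.
Qed.

Lemma In_flatten_map (X Y : Type) (g : X -> seq Y) (l : seq X) (x : X) (y : Y) :
  List.In x l -> List.In y (g x) -> List.In y (flatten (map g l)).
Proof.
elim: l => [|z l IH] //= [-> | /IH Hl] Hy; apply: List.in_or_app; [left | right]; auto.
Qed.

Lemma nat_coding_on_seq (A : Type) (s : seq A) : inhabited A ->
  exists (code : A -> nat) (decode : nat -> A),
    forall x, List.In x s -> decode (code x) = x.
Proof.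
move=> [a0]; elim: s => [|x s [code [decode Hs]]].
  by exists (fun _ => 0), (fun _ => a0).
exists (fun y => if pselect (y = x) then 0 else (code y).+1).
exists (fun k => if k is k'.+1 then decode k' else x).
move=> y Hy; case: pselect => [e|ne] /=; first by rewrite e.
by case: Hy => [Ey|/Hs //]; case: ne.
Qed.

Section Ultrafilters.
Variables (I : Type) (U : (I -> Prop) -> Prop).
Hypothesis UU : ultrafilter U.

Lemma ultrafilterT : U (fun _ => True).
Proof. by case: UU. Qed.

Lemma ultrafilterS {X Y : I -> Prop} : (forall i, X i -> Y i) -> U X -> U Y.
Proof. by case: UU => _ _ US _ _ XY /US; apply. Qed.

Lemma ultrafilterI {X Y : I -> Prop} : U X -> U Y -> U (fun i => X i /\ Y i).
Proof. by case: UU => _ _ _ UI _; apply: UI. Qed.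

Lemma ultrafilter_In_all (T : Type) (s : seq T) (P : T -> I -> Prop) :
  (forall x, List.In x s -> U (P x)) -> U (fun i => forall x, List.In x s -> P x i).
Proof.
elim: s => [|x s IH] Hs.
  by apply: ultrafilterS ultrafilterT => i _ y [].
have := ultrafilterI (Hs x (or_introl erefl)) (IH (fun y Hy => Hs y (or_intror Hy))).
by apply: ultrafilterS => i [Hx Hall] y /= [<- | /Hall].
Qed.

Lemma ultrafilter_forall_fin (T : finType) (P : T -> I -> Prop) :
  (forall x, U (P x)) -> U (fun i => forall x, P x i).
Proof.
move=> HP; have := @ultrafilter_In_all T (enum T) P (fun x _ => HP x).
by apply: ultrafilterS => i Hi x; apply/Hi/In_enum.
Qed.

End Ultrafilters.

Lemma ultrafilter_extension (T : Type) (F : (T -> Prop) -> Prop) :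
  F (fun _ => True) -> ~ F (fun _ => False) ->
  (forall X Y : T -> Prop, (forall i, X i -> Y i) -> F X -> F Y) ->
  (forall X Y : T -> Prop, F X -> F Y -> F (fun i => X i /\ Y i)) ->
  exists2 U, ultrafilter U & forall X, F X -> U X.
Proof.
move=> FT FF FS FI.
have PF : ProperFilter F by split=> //; split=> // X Y; apply: FS.
have [G [UG sFG]] := ultraFilterLemma PF.
exists G => //; have GP : ProperFilter G by case: UG.
split; [exact: filterT | exact: filter_not_empty | | exact: filterI |].
- by move=> X Y GX XY; apply: filterS XY GX.
- by move=> X; apply: in_ultra_setVsetC.
Qed.

Section Terms.
Variables (sym : Type) (ar : sym -> nat).
Implicit Types (A B : algebra ar) (sigma tau : hypersubst ar).

Lemma subst_comp (U V W : Type) (t : term ar U) (s1 : U -> term ar V)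
    (s2 : V -> term ar W) :
  subst (subst t s1) s2 = subst t (fun x => subst (s1 x) s2).
Proof. by elim: t => [x|f a IH] //=; congr App; apply: funext => j. Qed.

Lemma eval_subst A (W V : Type) (t : term ar W) (s : W -> term ar V) (v : V -> A) :
  eval v (subst t s) = eval (fun x => eval v (s x)) t.
Proof. by elim: t => [x|f a IH] //=; congr op; apply: funext => j. Qed.

Lemma eval_hom A B (h : A -> B) (V : Type) (v : V -> A) (t : term ar V) :
  is_hom h -> h (eval v t) = eval (h \o v) t.
Proof.
by move=> hh; elim: t => [x|f a IH] //=; rewrite hh; congr op; apply: funext => j.
Qed.

Lemma hsext_subst sigma (W V : Type) (t : term ar W) (s : W -> term ar V) :
  hsext sigma (subst t s) = subst (hsext sigma t) (fun x => hsext sigma (s x)).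
Proof.
by elim: t => [x|f a IH] //=; rewrite subst_comp; congr subst; apply: funext => j.
Qed.

Definition hcomp sigma tau : hypersubst ar := fun f => hsext sigma (tau f).

Lemma hsext_comp sigma tau (V : Type) (t : term ar V) :
  hsext sigma (hsext tau t) = hsext (hcomp sigma tau) t.
Proof.
by elim: t => [x|f a IH] //=; rewrite hsext_subst; congr subst; apply: funext => j.
Qed.

Definition hs_id : hypersubst ar := fun f => App (fun j => Var ar j).

Lemma hsext_id (V : Type) (t : term ar V) : hsext hs_id t = t.
Proof. by elim: t => [x|f a IH] //=; congr App; apply: funext => j. Qed.

Lemma eval_derived A sigma (V : Type) (v : V -> A) (t : term ar V) :
  @eval _ _ (derived A sigma) V v t = eval v (hsext sigma t).
Proof.
by elim: t => [x|f a IH] //=; rewrite eval_subst; congr eval; apply: funext => j.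
Qed.

End Terms.

Section Preservation.
Variables (sym : Type) (ar : sym -> nat).
Implicit Types (A B : algebra ar) (sigma : hypersubst ar).
Implicit Types (ps : seq (term ar nat * term ar nat)) (c : term ar nat * term ar nat).

Definition hs_eq sigma (p : term ar nat * term ar nat) :=
  (hsext sigma p.1, hsext sigma p.2).

Lemma qi_holds_derived A sigma ps c :
  qi_holds (derived A sigma) ps c <-> qi_holds A (map (hs_eq sigma) ps) (hs_eq sigma c).
Proof.
split=> H v Hv; move: (H v); rewrite /= ?eval_derived; apply=> p Hp.
  by rewrite !eval_derived; exact: (Hv (hs_eq sigma p) (List.in_map _ _ _ Hp)).
by have [q [<- Hq]] := proj1 (List.in_map_iff _ _ _) Hp; rewrite /= -!eval_derived; apply: Hv.
Qed.

Lemma hypersatisfies_derived A sigma q :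
  hypersatisfies A q -> hypersatisfies (derived A sigma) q.
Proof.
move=> H tau; apply/qi_holds_derived; rewrite -map_comp.
have -> : hs_eq sigma \o hs_eq tau = hs_eq (hcomp sigma tau).
  by apply: funext => p; rewrite /hs_eq /= !hsext_comp.
by rewrite /hs_eq /= !hsext_comp; apply: H.
Qed.

Lemma qi_holds_hsext_id A ps c :
  qi_holds A (map (hs_eq (@hs_id _ ar)) ps) (hs_eq (@hs_id _ ar) c) = qi_holds A ps c.
Proof.
have id_eq p : hs_eq (@hs_id _ ar) p = p by rewrite /hs_eq !hsext_id; case: p.
by rewrite id_eq (eq_map id_eq) map_id.
Qed.

Lemma qi_holds_embedding A B (h : B -> A) ps c :
  injective h -> is_hom h -> qi_holds A ps c -> qi_holds B ps c.
Proof.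
move=> hinj hh H v Hv; apply: hinj; rewrite !eval_hom //.
by apply: H => p Hp; rewrite -!eval_hom // Hv.
Qed.

Lemma qi_holds_trivial A ps c : (forall x y : A, x = y) -> qi_holds A ps c.
Proof. by move=> A1 v _; apply: A1. Qed.

Lemma eval_product (I : Type) (A : I -> algebra ar) B (h : B -> forall i, A i) :
  (forall f (args : 'I_(ar f) -> B),
     h (op args) = fun i => op (fun j => h (args j) i)) ->
  forall (V : Type) (v : V -> B) (t : term ar V),
    h (eval v t) = fun i => eval (fun x => h (v x) i) t.
Proof.
move=> hh V v; elim=> [x|f a IH] //=; rewrite hh.
by apply: functional_extensionality_dep => i; congr op; apply: funext => j; rewrite IH.
Qed.

Lemma qi_holds_product (I : Type) (A : I -> algebra ar) B ps c :
  is_product A B -> (forall i, qi_holds (A i) ps c) -> qi_holds B ps c.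
Proof.
move=> [h [[g hK _] hh]] H v Hv; apply: (can_inj hK); rewrite !(eval_product hh).
apply: functional_extensionality_dep => i; apply: H => p Hp.
by have := congr1 (fun x => h x i) (Hv p Hp); rewrite !(eval_product hh).
Qed.

Lemma qi_holds_ultraproduct (I : Type) (A : I -> algebra ar) U B ps c :
  ultrafilter U -> is_ultraproduct A U B ->
  (forall i, qi_holds (A i) ps c) -> qi_holds B ps c.
Proof.
move=> UU [h [hsurj hker hh]] H v Hv.
pose lift n := proj1_sig (cid (hsurj (v n))).
have lift_ok n : h (lift n) = v n by rewrite /lift; case: cid.
have ev t : eval v t = h (fun i => eval (fun n => lift n i) t).
  elim: t => [n|f a IH] /=; first by rewrite lift_ok.
  by rewrite hh; congr op; apply: funext => j.
rewrite !ev; apply/hker.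
have Hall : U (fun i => forall p, List.In p ps ->
                 eval (fun n => lift n i) p.1 = eval (fun n => lift n i) p.2).
  by apply: ultrafilter_In_all => // p /Hv; rewrite !ev => /hker.
by move: Hall; apply: (ultrafilterS UU) => i /H.
Qed.

End Preservation.

Section Constructions.
Variables (sym : Type) (ar : sym -> nat) (I : Type) (C : I -> algebra ar).

Lemma dprod_inhabited : inhabited (forall i, C i).
Proof.
apply: inhabits => i.
have ex_point : exists x : C i, True by case: (carrier_nonempty (C i)) => x; exists x.
exact: proj1_sig (cid ex_point).
Qed.

Definition dprod_algebra : algebra ar :=
  @Algebra _ _ (forall i, C i) (fun f args i => op (fun j => args j i)) dprod_inhabited.

Lemma dprod_algebra_is_product : is_product C dprod_algebra.
Proof. by exists id; split=> //; exists id. Qed.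

Variables (U : (I -> Prop) -> Prop).
Hypothesis UU : ultrafilter U.

Definition ueq (x y : forall i, C i) := U (fun i => x i = y i).

Lemma ueq_refl x : ueq x x.
Proof. by apply: (ultrafilterS UU) (ultrafilterT UU). Qed.

Lemma ueq_sym x y : ueq x y -> ueq y x.
Proof. by rewrite /ueq; apply: (ultrafilterS UU) => i ->. Qed.

Lemma ueq_trans x y z : ueq x y -> ueq y z -> ueq x z.
Proof.
by rewrite /ueq => xy /(ultrafilterI UU xy); apply: (ultrafilterS UU) => i [-> ->].
Qed.

Definition uclass x := ueq x.

Lemma uclass_eq x y : uclass x = uclass y <-> ueq x y.
Proof.
split=> [E | xy]; first by have : uclass y y := ueq_refl y; rewrite -E.
apply: funext => z; apply: propext.
by split; [apply: ueq_trans (ueq_sym xy) | apply: ueq_trans].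
Qed.

Definition ucarrier := {S : (forall i, C i) -> Prop | exists x, S = uclass x}.

Definition uproj x : ucarrier := exist _ (uclass x) (ex_intro _ x erefl).

Lemma uproj_eq x y : uproj x = uproj y <-> ueq x y.
Proof.
rewrite -uclass_eq; split=> [/(congr1 sval) // | E].
by rewrite /uproj; move: (ex_intro _ x _); rewrite E => p; congr exist; apply: Prop_irrelevance.
Qed.

Lemma uproj_surj S : exists x, uproj x = S.
Proof.
case: S => S [x E]; exists x; subst S; congr exist; exact: Prop_irrelevance.
Qed.

Definition urepr S : forall i, C i := proj1_sig (cid (uproj_surj S)).

Lemma ureprK S : uproj (urepr S) = S.
Proof. by rewrite /urepr; case: cid. Qed.

Definition ultraproduct : algebra ar :=
  @Algebra _ _ ucarrier (fun f args => uproj (fun i => op (fun j => urepr (args j) i)))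
    (let: inhabits x := dprod_inhabited in inhabits (uproj x)).

Lemma ultraproduct_exists : exists B, is_ultraproduct C U B.
Proof.
exists ultraproduct, uproj; split; [exact: uproj_surj | exact: uproj_eq |].
move=> f args; apply/uproj_eq.
have : U (fun i => forall j, args j i = urepr (uproj (args j)) i).
  by apply: ultrafilter_forall_fin => // j; apply/uproj_eq; rewrite ureprK.
by apply: (ultrafilterS UU) => i Hi; congr op; apply: funext.
Qed.

End Constructions.

Section QuasivarietyCompleteness.
Variables (sym : Type) (ar : sym -> nat) (K : algebra ar -> Prop) (A : algebra ar).
Hypothesis A_models_qi_K : forall ps c,
  (forall C, K C -> qi_holds C ps c) -> qi_holds A ps c.

(* [existT f args] stands for the entry [f(args) = op args] of the table of [A]. *)
Definition entry := {f : sym & 'I_(ar f) -> A}.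

Definition respects (C : algebra ar) (v : A -> C) (e : entry) :=
  v (op (projT2 e)) = op (fun j => v (projT2 e j)).

Definition entry_elems (e : entry) : seq A :=
  op (projT2 e) :: map (projT2 e) (enum 'I_(ar (projT1 e))).

Definition entry_eq (code : A -> nat) (e : entry) : term ar nat * term ar nat :=
  (Var ar (code (op (projT2 e))), App (fun j => Var ar (code (projT2 e j)))).

Lemma separating_model_of_table (a b : A) (l : seq entry) : a <> b ->
  exists M : {C : algebra ar & A -> C},
    [/\ K (projT1 M), projT2 M a <> projT2 M b
       & forall e, List.In e l -> respects (projT2 M) e].
Proof.
move=> ab; apply: contrapT => noM.
have [code [decode decodeK]] :=
  nat_coding_on_seq (a :: b :: flatten (map entry_elems l)) (carrier_nonempty A).
have table_qi C : K C -> qi_holds C (map (entry_eq code) l) (Var ar (code a), Var ar (code b)).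
  move=> KC w Hw; apply: contrapT => ne; apply: noM.
  exists (existT _ C (w \o code)); split=> // e He.
  exact: (Hw _ (List.in_map _ _ _ He)).
have elem_dec e x : List.In e l -> List.In x (entry_elems e) -> decode (code x) = x.
  by move=> He Hx; apply/decodeK/or_intror/or_intror/(In_flatten_map He).
apply: ab; have := @A_models_qi_K _ _ table_qi decode; rewrite /= !decodeK /=; auto; apply.
move=> _ /List.in_map_iff[[f args] [<- He]] /=.
rewrite (elem_dec _ _ He) /=; last by left.
congr op; apply: funext => j.
by apply/esym/(elem_dec _ _ He)/or_intror/List.in_map/In_enum.
Qed.

Hypothesis K_Pu : closed_Pu K.

(* The ultraproduct over finite tables [l], along an ultrafilter containing
   every set [{l | L is contained in l}], respects the whole table of [A]. *)
Lemma separating_hom (a b : A) : a <> b ->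
  exists M : {C : algebra ar & A -> C},
    [/\ K (projT1 M), is_hom (projT2 M) & projT2 M a <> projT2 M b].
Proof.
move=> ab.
pose M l := proj1_sig (cid (separating_model_of_table l ab)).
have M_spec l := proj2_sig (cid (separating_model_of_table l ab)).
have M_K l : K (projT1 (M l)) by case: (M_spec l).
pose F (X : seq entry -> Prop) :=
  exists L, forall l, (forall e, List.In e L -> List.In e l) -> X l.
have [U UU FU] : exists2 U, ultrafilter U & forall X, F X -> U X.
  apply: ultrafilter_extension.
  - by exists [::].
  - by case=> L /(_ L); apply.
  - by move=> X Y XY [L HL]; exists L => l /HL /XY.
  - move=> X Y [L1 H1] [L2 H2]; exists (L1 ++ L2) => l HL.
    by split; [apply: H1 | apply: H2] => e He; apply/HL/List.in_or_app; auto.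
have [B UB] := ultraproduct_exists (fun l => projT1 (M l)) UU.
have [h [_ hker hh]] := UB.
exists (existT _ B (fun x => h (fun l => projT2 (M l) x))); split=> /=.
- exact: K_Pu UU M_K UB.
- move=> f args; rewrite -hh; apply/hker/FU.
  exists [:: existT _ f args] => l /(_ _ (or_introl erefl)).
  by case: (M_spec l) => _ _; apply.
- have U_proper : ~ U (fun _ => False) by case: UU.
  move=> /hker Uab; apply: U_proper; move: Uab; apply: (ultrafilterS UU) => l.
  by case: (M_spec l).
Qed.

Hypotheses (K_S : closed_S K) (K_P : closed_P K).

Lemma mem_of_models_qi : K A.
Proof.
pose M (p : {p : A * A | p.1 <> p.2}) := proj1_sig (cid (separating_hom (proj2_sig p))).
have M_spec (p : {p : A * A | p.1 <> p.2}) := proj2_sig (cid (separating_hom (proj2_sig p))).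
have M_K p : K (projT1 (M p)) by case: (M_spec p).
have K_prod : K (dprod_algebra (fun p => projT1 (M p))).
  exact: K_P M_K (dprod_algebra_is_product _).
apply: (K_S K_prod (h := fun x p => projT2 (M p) x)).
- move=> x y Exy; apply: contrapT => ne.
  case: (M_spec (exist _ (x, y) ne)) => _ _; apply.
  exact: (congr1 (fun g => g (exist _ (x, y) ne)) Exy).
- move=> f args; apply: functional_extensionality_dep => p.
  by case: (M_spec p) => _ + _; apply.
Qed.

End QuasivarietyCompleteness.

Theorem theorem5p5 (sym : Type) (ar : sym -> nat) (K : algebra ar -> Prop) :
  hyperquasivariety K <->
  [/\ closed_Pu K, closed_S K, closed_P K, has_trivial K & closed_D K].
Proof.
split=> [[Sigma defK] | [K_Pu K_S K_P _ K_D]].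
  have K_hsat A q : K A -> Sigma q -> hypersatisfies A q := fun KA => proj1 (defK A) KA q.
  split.
  - move=> I A U B UU KA UB; apply/defK => q Sq sigma.
    by apply: qi_holds_ultraproduct UU UB _ => i; apply: K_hsat (KA i) Sq sigma.
  - move=> A B KA h h_inj h_hom; apply/defK => q Sq sigma.
    exact: qi_holds_embedding h_inj h_hom (K_hsat _ _ KA Sq sigma).
  - move=> I A B KA AB; apply/defK => q Sq sigma.
    by apply: qi_holds_product AB _ => i; apply: K_hsat (KA i) Sq sigma.
  - exists (@Algebra _ ar unit (fun _ _ => tt) (inhabits tt)).
    by split=> [|[] []//]; apply/defK => q _ sigma; apply: qi_holds_trivial => [[] []].
  - by move=> A sigma KA; apply/defK => q Sq; apply/hypersatisfies_derived/K_hsat.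
exists (fun q => forall C, K C -> hypersatisfies C q) => A.
split=> [KA q | A_hsat]; first by apply.
apply: mem_of_models_qi K_Pu K_S K_P => ps c K_qi.
rewrite -qi_holds_hsext_id; apply: (A_hsat (HQI ps c)) => C KC sigma.
exact/qi_holds_derived/K_qi/K_D.
Qed.
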